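(* Let the Timehash scheme be as described in the context, with hierarchy $m_1 > m_2 > \dots > m_k$. Let a document have operating hours given by integers $0 \le s < e \le 1440$, i.e. it is open at the minutes $t$ with $s \le t < e$, and let $H(s,e)$ be its set of index keys. Then for every minute $t \in \{0,\dots,1439\}$ with $t < s$ or $t \ge e$, we have $Q(t) \cap H(s,e) = \emptyset$; that is, the document is not retrieved by the point query at $t$ (zero false positives).
   Context: Time of day is measured in minutes since midnight, $\{0,1,\dots,1439\}$. A hierarchy of measures is a sequence of positive integers $m_1 > m_2 > \dots > m_k$ with $m_k = 1$, $m_i$ dividing $m_{i-1}$ for $2 \le i \le k$, and $m_1$ dividing $1440$ (e.g. $(240,60,15,5,1)$). A level-$i$ block is a set of minutes $[a, a+m_i) = \{a, \dots, a+m_i-1\}$ with $a$ a nonnegative multiple of $m_i$ and $a + m_i \le 1440$; its key is the pair $(i,a)$. Every level-$i$ block with $i \ge 2$ is contained in a unique level-$(i-1)$ block, its parent. For a range $0 \le s < e \le 1440$ (the minutes $s,\dots,e-1$), the index key set $H(s,e)$ is the set of keys of all blocks $B$ (at any level) such that $B \subseteq [s,e)$ and either $B$ is at level 1 or the parent of $B$ is not contained in $[s,e)$. For a query minute $t$, the query key set $Q(t)$ consists of the keys of the $k$ blocks, one at each level, that contain $t$. A document is retrieved by the point query at $t$ iff some query key in $Q(t)$ equals some index key of the document. *)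

From mathcomp Require Import all_boot.
Set Implicit Arguments. Unset Strict Implicit. Unset Printing Implicit Defensive.

(* A hierarchy of measures (m_1, ..., m_k) is the sequence [:: m_1; ...; m_k].
   Levels are numbered 1..k; m_i = nth 0 ms i.-1. *)
Definition day := 1440.

Definition meas (ms : seq nat) (i : nat) : nat := nth 0 ms i.-1.

Definition hierarchy (ms : seq nat) : Prop :=
  [/\ 0 < size ms,
      (forall i, 0 < i <= size ms -> 0 < meas ms i),
      (forall i, 2 <= i <= size ms ->
         meas ms i < meas ms i.-1 /\ meas ms i %| meas ms i.-1),
      meas ms (size ms) = 1
    & meas ms 1 %| day].

Definition key := (nat * nat)%type.

(* (i,a) is the key of a level-i block [a, a + m_i) *)
Definition is_block (ms : seq nat) (b : key) : Prop :=
  let: (i, a) := b in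
  [/\ 1 <= i <= size ms, meas ms i %| a & a + meas ms i <= day].

Definition in_block (ms : seq nat) (b : key) (t : nat) : Prop :=
  let: (i, a) := b in a <= t < a + meas ms i.

Definition block_sub (ms : seq nat) (b : key) (s e : nat) : Prop :=
  let: (i, a) := b in s <= a /\ a + meas ms i <= e.

(* parent of a level-i block (i >= 2): the level-(i-1) block containing it *)
Definition parent (ms : seq nat) (b : key) : key :=
  let: (i, a) := b in (i.-1, a - a %% meas ms i.-1).

Definition H (ms : seq nat) (s e : nat) (b : key) : Prop :=
  is_block ms b /\ block_sub ms b s e /\
  (b.1 = 1 \/ ~ block_sub ms (parent ms b) s e).

Definition Q (ms : seq nat) (t : nat) (b : key) : Prop :=
  is_block ms b /\ in_block ms b t.

From mathcomp Require Import all_boot.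

Lemma in_block_sub {ms : seq nat} {b : key} {s e t : nat} :
  in_block ms b t -> block_sub ms b s e -> s <= t < e.
Proof.
case: b => i a /= /andP [le_at lt_t_end] [le_sa le_end_e].
by rewrite (leq_trans le_sa le_at) (leq_trans lt_t_end le_end_e).
Qed.

Theorem theorem2 (ms : seq nat) (s e t : nat) :
  hierarchy ms -> s < e -> e <= day -> t < day -> (t < s \/ e <= t) ->
  forall b : key, ~ (Q ms t b /\ H ms s e b).
Proof.
move=> _ _ _ _ t_out b [[_ t_in_b] [_ [b_sub _]]].
have /andP [le_st lt_te] := in_block_sub t_in_b b_sub.
by case: t_out; [rewrite ltnNge le_st | rewrite leqNgt lt_te].
Qed.
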